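(* Let $\Gamma$ be a non-elementary hyperbolic group endowed with an admissible metric which is strongly hyperbolic, let $C\ge0$ be a rough geodesic constant for this metric, and let $K>2C$. Set $$\Delta=\{(x,y)\in\Gamma\times\Gamma:\ K-C\le|x,y|\le K+C\},$$ on which $\Gamma$ acts by $g.(x,y)=(gx,gy)$, and for $g\in\Gamma$ define $c_g:\Delta\to\mathbb{R}$ by $c_g(x,y)=\langle g,x\rangle-\langle g,y\rangle$, where $\langle\cdot,\cdot\rangle$ is the Gromov product based at the identity. Then for all sufficiently large $p\in[1,\infty)$, one has $c_g\in\ell^p(\Delta)$ for every $g\in\Gamma$, and the affine isometric action of $\Gamma$ on $\ell^p(\Delta)$ given by $(g,\phi)\mapsto g.\phi+c_g$, where $(g.\phi)(x,y)=\phi(g^{-1}x,g^{-1}y)$, is well-defined and proper.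
   Context: Metric notation: $|x,y|$ is the distance, $|g|=|1,g|$, and the Gromov product with basepoint $o$ is $\langle x,y\rangle_o=\tfrac12(|o,x|+|o,y|-|x,y|)$. A metric space is strongly hyperbolic if $e^{-\langle x,y\rangle_o}\le e^{-\langle x,z\rangle_o}+e^{-\langle z,y\rangle_o}$ for all points $x,y,z,o$. A metric on a hyperbolic group $\Gamma$ is admissible if (i) it is left-invariant: $|gx,gy|=|x,y|$; (ii) it is roughly geodesic with constant $C\ge0$: for all $x,y\in\Gamma$ there is a map $\gamma:[a,b]\to\Gamma$ with $\gamma(a)=x$, $\gamma(b)=y$ and $|s-t|-C\le|\gamma(s),\gamma(t)|\le|s-t|+C$ for all $s,t\in[a,b]$; (iii) it is quasi-isometric to a word metric on $\Gamma$. The map $g\mapsto c_g$ satisfies the cocycle identity $c_{gh}=c_g+g.c_h$. The affine isometric action is proper if $\|c_g\|_p\to\infty$ as $g\to\infty$ in $\Gamma$ (equivalently, for every bounded set $B\subset\ell^p(\Delta)$ only finitely many $g$ satisfy $(g\cdot B)\cap B\neq\emptyset$). *)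

From Stdlib Require Import Reals List ZArith.
Import ListNotations.
Open Scope R_scope.

Section Defs.
Context {G : Type} (mul : G -> G -> G) (inv : G -> G) (e : G).

Definition is_group : Prop :=
  (forall x y z, mul x (mul y z) = mul (mul x y) z) /\
  (forall x, mul e x = x) /\ (forall x, mul x e = x) /\
  (forall x, mul (inv x) x = e) /\ (forall x, mul x (inv x) = e).

Fixpoint gpow_nat (g : G) (n : nat) : G :=
  match n with O => e | S n => mul g (gpow_nat g n) end.
Definition gpow (g : G) (k : Z) : G :=
  match k with
  | Z0 => e
  | Zpos p => gpow_nat g (Pos.to_nat p)
  | Zneg p => gpow_nat (inv g) (Pos.to_nat p)
  end.

Definition wprod (w : list G) : G := fold_right mul e w.

Definition word_over (S : list G) (w : list G) : Prop :=
  forall s, In s w -> In s S \/ In (inv s) S.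

Definition generates (S : list G) : Prop :=
  forall g, exists w, word_over S w /\ wprod w = g.

Definition word_length (S : list G) (g : G) (n : nat) : Prop :=
  (exists w, word_over S w /\ wprod w = g /\ length w = n) /\
  (forall w, word_over S w -> wprod w = g -> (n <= length w)%nat).

Definition word_dist (S : list G) (x y : G) (r : R) : Prop :=
  exists n, word_length S (mul (inv x) y) n /\ r = INR n.

Definition gromov (d : G -> G -> R) (o x y : G) : R :=
  (d o x + d o y - d x y) / 2.

Definition is_metric (d : G -> G -> R) : Prop :=
  (forall x y, 0 <= d x y) /\ (forall x y, d x y = 0 <-> x = y) /\
  (forall x y, d x y = d y x) /\ (forall x y z, d x z <= d x y + d y z).

(** Γ is a hyperbolic group: finitely generated by S, word metric δ-hyperbolic
    (four-point condition). *)
Definition hyperbolic_group : Prop :=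
  exists S : list G, generates S /\
  exists delta : R, 0 <= delta /\
  forall x y z o dxy dxz dyz dox doy doz,
    word_dist S x y dxy -> word_dist S x z dxz -> word_dist S y z dyz ->
    word_dist S o x dox -> word_dist S o y doy -> word_dist S o z doz ->
    (dox + doz - dxz) / 2 >=
      Rmin ((dox + doy - dxy) / 2) ((doy + doz - dyz) / 2) - delta.

(** non-elementary: not virtually cyclic (includes: not finite), i.e. no cyclic
    subgroup <g> has finite index. *)
Definition non_elementary : Prop :=
  ~ exists g : G, exists reps : list G,
      forall x, exists r k, In r reps /\ x = mul r (gpow g k).

Definition left_invariant (d : G -> G -> R) : Prop :=
  forall g x y, d (mul g x) (mul g y) = d x y.

Definition roughly_geodesic (d : G -> G -> R) (C : R) : Prop :=
  forall x y, exists (a b : R) (gam : R -> G),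
    a <= b /\ gam a = x /\ gam b = y /\
    forall s t, a <= s <= b -> a <= t <= b ->
      Rabs (s - t) - C <= d (gam s) (gam t) <= Rabs (s - t) + C.

Definition qi_to_word_metric (d : G -> G -> R) : Prop :=
  exists S : list G, generates S /\
  exists lam c : R, 1 <= lam /\ 0 <= c /\
  forall x y r, word_dist S x y r -> r / lam - c <= d x y <= lam * r + c.

Definition admissible (d : G -> G -> R) : Prop :=
  is_metric d /\ left_invariant d /\
  (exists C, 0 <= C /\ roughly_geodesic d C) /\ qi_to_word_metric d.

Definition strongly_hyperbolic (d : G -> G -> R) : Prop :=
  forall x y z o,
    exp (- gromov d o x y) <= exp (- gromov d o x z) + exp (- gromov d o z y).

Definition inDelta (d : G -> G -> R) (K C : R) (z : G * G) : Prop :=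
  K - C <= d (fst z) (snd z) <= K + C.

(** t^p for t >= 0, with 0^p = 0 *)
Definition rpow (t p : R) : R := if Req_EM_T t 0 then 0 else Rpower t p.

(** lp_le p f M :  sum_{z in Δ} |f z|^p <= M  (i.e. ||f||_p^p <= M),
    expressed as a bound on all finite partial sums. *)
Definition lp_le (d : G -> G -> R) (K C p : R) (f : G * G -> R) (M : R) : Prop :=
  forall l : list (G * G), NoDup l -> (forall z, In z l -> inDelta d K C z) ->
    fold_right Rplus 0 (map (fun z => rpow (Rabs (f z)) p) l) <= M.

Definition in_lp (d : G -> G -> R) (K C p : R) (f : G * G -> R) : Prop :=
  exists M, lp_le d K C p f M.

Definition lin_act (g : G) (phi : G * G -> R) : G * G -> R :=
  fun z => phi (mul (inv g) (fst z), mul (inv g) (snd z)).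

Definition cocycle (d : G -> G -> R) (g : G) : G * G -> R :=
  fun z => gromov d e g (fst z) - gromov d e g (snd z).

Definition aff_act (d : G -> G -> R) (g : G) (phi : G * G -> R) : G * G -> R :=
  fun z => lin_act g phi z + cocycle d g z.

End Defs.

From Stdlib Require Import Reals List Lra Lia ZArith Classical.
Import ListNotations.
Open Scope R_scope.

(* Strong hyperbolicity combined with [1 + t <= exp t] gives
   |<g,x> - <g,y>| <= exp (|g| - <x,y>), so on Δ the cocycle c_g decays like
   exp (-|x|).  Comparison with a word metric shows that balls grow at most
   exponentially, hence for p large the sum of |c_g|^p over Δ is dominated by a
   convergent geometric series.  Conversely, cutting a rough geodesic from 1 to
   g into pieces of length K yields about |g|/K distinct pairs of Δ on which
   |c_g| >= K - 2C, so ||c_g||_p^p bounds |g|, and properness follows from the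
   finiteness of balls.  The affine maps form an isometric action by the cocycle
   identity c_(gh) = c_g + g.c_h and left invariance. *)

Lemma exp_le_exp x y : x <= y -> exp x <= exp y.
Proof. intros [Hlt | ->]; [left; now apply exp_increasing | lra]. Qed.

Lemma exp_pow x n : exp x ^ n = exp (INR n * x).
Proof. rewrite <- Rpower_pow by apply exp_pos. unfold Rpower. now rewrite ln_exp. Qed.

Lemma sub_le_mul_exp A B r : exp (- B) <= exp (- A) + r -> A - B <= r * exp A.
Proof.
  intros H. pose proof (exp_ineq1_le (A - B)) as Hineq.
  assert (E1 : exp (A - B) = exp A * exp (- B)) by (unfold Rminus; apply exp_plus).
  assert (E2 : exp A * exp (- A) = 1) by (rewrite <- exp_plus, Rplus_opp_r; apply exp_0).
  pose proof (exp_pos A).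
  assert (exp A * exp (- B) <= exp A * (exp (- A) + r)) by (apply Rmult_le_compat_l; lra).
  nra.
Qed.

Lemma ln_ge0 a : 1 <= a -> 0 <= ln a.
Proof. intros [Ha | <-]; [left; rewrite <- ln_1; apply ln_increasing | rewrite ln_1]; lra. Qed.

Lemma mul_exp_neg_div_lt_1 a lam p : 1 <= a -> 0 < lam -> lam * (ln a + 1) <= p ->
  a * exp (- (p / lam)) < 1.
Proof.
  intros Ha Hlam Hp. rewrite <- (exp_ln a), <- exp_plus, <- exp_0 by lra.
  apply exp_increasing. enough (ln a < p / lam) by lra.
  apply Rmult_lt_reg_l with lam; [exact Hlam |].
  replace (lam * (p / lam)) with p by (field; lra). lra.
Qed.

Lemma rpow_ge0 t p : 0 <= rpow t p.
Proof. unfold rpow, Rpower. destruct (Req_EM_T t 0); [lra | left; apply exp_pos]. Qed.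

Lemma rpow_Rpower t p : t <> 0 -> rpow t p = Rpower t p.
Proof. unfold rpow. now destruct (Req_EM_T t 0). Qed.

Lemma rpow_exp a p : rpow (exp a) p = exp (p * a).
Proof. rewrite rpow_Rpower by apply exp_neq_0. unfold Rpower. now rewrite ln_exp. Qed.

Lemma rpow_le t s p : 0 <= p -> 0 <= t <= s -> rpow t p <= rpow s p.
Proof.
  intros Hp [Ht Hts]. unfold rpow.
  destruct (Req_EM_T t 0) as [Ht0 | Ht0]; destruct (Req_EM_T s 0) as [Hs0 | Hs0].
  - lra.
  - left; apply exp_pos.
  - exfalso; apply Ht0; lra.
  - apply Rle_Rpower_l; [exact Hp | split; [destruct Ht; [lra | congruence] | exact Hts]].
Qed.

Lemma rpow_abs_add_le a b p : 0 <= p ->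
  rpow (Rabs (a + b)) p <= Rpower 2 p * (rpow (Rabs a) p + rpow (Rabs b) p).
Proof.
  intros Hp. set (m := Rmax (Rabs a) (Rabs b)).
  assert (Hma : Rabs a <= m) by apply Rmax_l.
  assert (Hmb : Rabs b <= m) by apply Rmax_r.
  assert (Hm : rpow m p <= rpow (Rabs a) p + rpow (Rabs b) p).
  { pose proof (rpow_ge0 (Rabs a) p). pose proof (rpow_ge0 (Rabs b) p).
    unfold m, Rmax; destruct (Rle_dec (Rabs a) (Rabs b)); lra. }
  assert (H2 : 0 < Rpower 2 p) by apply exp_pos.
  apply Rle_trans with (rpow (2 * m) p).
  { apply rpow_le; [exact Hp |]. pose proof (Rabs_pos a). split; [apply Rabs_pos |].
    pose proof (Rabs_triang a b). lra. }
  destruct (Req_EM_T m 0) as [Hm0 | Hm0].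
  - rewrite Hm0, Rmult_0_r. unfold rpow at 1. destruct (Req_EM_T 0 0); [| lra].
    pose proof (rpow_ge0 (Rabs a) p). pose proof (rpow_ge0 (Rabs b) p). nra.
  - assert (Hmpos : 0 < m) by (pose proof (Rabs_pos a); lra).
    rewrite rpow_Rpower by lra. rewrite <- Rpower_mult_distr by lra.
    rewrite <- (rpow_Rpower m) by lra. apply Rmult_le_compat_l; lra.
Qed.

Definition sumR {A : Type} (f : A -> R) (l : list A) : R := fold_right Rplus 0 (map f l).

Lemma sumR_le {A : Type} (f g : A -> R) l :
  (forall z, In z l -> f z <= g z) -> sumR f l <= sumR g l.
Proof.
  induction l as [| z l IH]; intros H; unfold sumR in *; simpl; [lra |].
  apply Rplus_le_compat; [apply H; now left | apply IH; intros; apply H; now right].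
Qed.

Lemma sumR_add {A : Type} (f g : A -> R) l : sumR (fun z => f z + g z) l = sumR f l + sumR g l.
Proof. induction l; unfold sumR in *; simpl; [lra | rewrite IHl; lra]. Qed.

Lemma sumR_scale {A : Type} (f : A -> R) c l : sumR (fun z => c * f z) l = c * sumR f l.
Proof. induction l; unfold sumR in *; simpl; [lra | rewrite IHl; lra]. Qed.

Lemma sumR_le_length_mul {A : Type} (f : A -> R) c l :
  (forall z, In z l -> f z <= c) -> sumR f l <= INR (length l) * c.
Proof.
  induction l as [| z l IH]; intros H; unfold sumR in *; cbn [length map fold_right]; [simpl; lra |].
  rewrite S_INR. assert (f z <= c) by (apply H; now left).
  assert (fold_right Rplus 0 (map f l) <= INR (length l) * c) by (apply IH; intros; apply H; now right).
  lra.
Qed.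

Lemma sumR_ge_length_mul {A : Type} (f : A -> R) c l :
  (forall z, In z l -> c <= f z) -> INR (length l) * c <= sumR f l.
Proof.
  induction l as [| z l IH]; intros H; unfold sumR in *; cbn [length map fold_right]; [simpl; lra |].
  rewrite S_INR. assert (c <= f z) by (apply H; now left).
  assert (INR (length l) * c <= fold_right Rplus 0 (map f l)) by (apply IH; intros; apply H; now right).
  lra.
Qed.

Lemma sumR_filter {A : Type} (f : A -> R) (t : A -> bool) l :
  sumR f l = sumR f (filter t l) + sumR f (filter (fun z => negb (t z)) l).
Proof.
  induction l as [| z l IH]; unfold sumR in *; simpl; [lra |].
  destruct (t z); simpl; rewrite IH; lra.
Qed.

Lemma sumR_le_length_of_incl {A : Type} (f : A -> R) (P : list A) b l :
  NoDup l -> 0 <= b -> (forall z, In z l -> In z P /\ f z <= b) ->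
  sumR f l <= INR (length P) * b.
Proof.
  intros Hnd Hb H. apply Rle_trans with (INR (length l) * b).
  - apply sumR_le_length_mul. intros z Hz. apply H, Hz.
  - apply Rmult_le_compat_r; [exact Hb |].
    apply le_INR, NoDup_incl_length; [exact Hnd |]. intros z Hz. apply H, Hz.
Qed.

Lemma sumR_le_by_levels {A : Type} (f : A -> R) (lev : A -> nat) (P : nat -> list A)
    (b : nat -> R) N l :
  NoDup l -> (forall k, 0 <= b k) ->
  (forall z, In z l -> (lev z <= N)%nat /\ In z (P (lev z)) /\ f z <= b (lev z)) ->
  sumR f l <= sum_f_R0 (fun k => INR (length (P k)) * b k) N.
Proof.
  revert l; induction N as [| N IH]; intros l Hnd Hb H; simpl.
  - apply sumR_le_length_of_incl; [exact Hnd | apply Hb |].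
    intros z Hz. destruct (H z Hz) as (Hlev & HP). now replace 0%nat with (lev z) by lia.
  - rewrite (sumR_filter f (fun z => Nat.eqb (lev z) (S N))).
    assert (Htop : sumR f (filter (fun z => Nat.eqb (lev z) (S N)) l) <= INR (length (P (S N))) * b (S N)).
    { apply sumR_le_length_of_incl; [now apply NoDup_filter | apply Hb |].
      intros z Hz. apply filter_In in Hz as [Hz Heq]. apply Nat.eqb_eq in Heq.
      rewrite <- Heq. apply H, Hz. }
    assert (Hrest : sumR f (filter (fun z => negb (Nat.eqb (lev z) (S N))) l) <=
                    sum_f_R0 (fun k => INR (length (P k)) * b k) N).
    { apply IH; [now apply NoDup_filter | exact Hb |].
      intros z Hz. apply filter_In in Hz as [Hz Hne].
      apply Bool.negb_true_iff, Nat.eqb_neq in Hne. destruct (H z Hz) as (Hlev & HP).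
      split; [lia | exact HP]. }
    lra.
Qed.

Lemma sum_geom_le r N : 0 <= r < 1 -> sum_f_R0 (fun k => r ^ k) N <= / (1 - r).
Proof.
  intros Hr. rewrite tech3 by lra. pose proof (pow_le r (S N) (proj1 Hr)).
  unfold Rdiv. apply Rle_trans with (1 * / (1 - r)); [| lra].
  apply Rmult_le_compat_r; [apply Rlt_le, Rinv_0_lt_compat |]; lra.
Qed.

Lemma In_le_list_max n l : In n l -> (n <= list_max l)%nat.
Proof. intros Hn. exact (proj1 (Forall_forall _ _) (proj1 (list_max_le l _) (le_n _)) n Hn). Qed.

Section Group.
Context {G : Type} {mul : G -> G -> G} {inv : G -> G} {e : G}.
Hypothesis Hgrp : is_group mul inv e.

Lemma mul_inv_cancel_l g x : mul (inv g) (mul g x) = x.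
Proof. destruct Hgrp as (A & L & _ & IL & _). now rewrite A, IL, L. Qed.

Lemma mul_inv_cancel_r g x : mul g (mul (inv g) x) = x.
Proof. destruct Hgrp as (A & L & _ & _ & IR). now rewrite A, IR, L. Qed.

Lemma mul_cancel_l g x y : mul g x = mul g y -> x = y.
Proof. intros H. rewrite <- (mul_inv_cancel_l g x), <- (mul_inv_cancel_l g y). now rewrite H. Qed.

Lemma mul_inv_l g : mul (inv g) g = e.
Proof. apply Hgrp. Qed.

Lemma mul_1_l x : mul e x = x.
Proof. apply Hgrp. Qed.

Lemma mul_1_r x : mul x e = x.
Proof. apply Hgrp. Qed.

Lemma inv_1 : inv e = e.
Proof. rewrite <- (mul_1_l (inv e)). apply Hgrp. Qed.

Lemma inv_inv g : inv (inv g) = g.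
Proof.
  apply (mul_cancel_l (inv g)). destruct Hgrp as (_ & _ & _ & IL & IR). now rewrite IR, IL.
Qed.

Lemma inv_mul g h : inv (mul g h) = mul (inv h) (inv g).
Proof.
  apply (mul_cancel_l (mul g h)). destruct Hgrp as (A & _ & _ & _ & IR).
  now rewrite IR, <- A, mul_inv_cancel_r, IR.
Qed.

End Group.

Lemma lp_le_ext {G : Type} (d : G -> G -> R) K C p (f f' : G * G -> R) M :
  (forall z, f z = f' z) -> lp_le d K C p f M -> lp_le d K C p f' M.
Proof.
  intros E H l Hnd HD. erewrite map_ext; [now apply H |]. intros z; simpl. now rewrite E.
Qed.

Lemma lp_le_add {G : Type} (d : G -> G -> R) K C p (f h : G * G -> R) M1 M2 : 0 <= p ->
  lp_le d K C p f M1 -> lp_le d K C p h M2 ->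
  lp_le d K C p (fun z => f z + h z) (Rpower 2 p * (M1 + M2)).
Proof.
  intros Hp Hf Hh l Hnd HD.
  change (sumR (fun z => rpow (Rabs (f z + h z)) p) l <= Rpower 2 p * (M1 + M2)).
  apply Rle_trans with (sumR (fun z => Rpower 2 p * (rpow (Rabs (f z)) p + rpow (Rabs (h z)) p)) l).
  { apply sumR_le. intros z _. now apply rpow_abs_add_le. }
  rewrite sumR_scale, sumR_add. apply Rmult_le_compat_l; [left; apply exp_pos |].
  apply Rplus_le_compat; [apply Hf | apply Hh]; assumption.
Qed.

Lemma lp_le_length_mul_le {G : Type} (d : G -> G -> R) K C p (f : G * G -> R) M l delta :
  0 <= p -> 0 <= delta -> lp_le d K C p f M -> NoDup l ->
  (forall z, In z l -> inDelta d K C z /\ delta <= Rabs (f z)) ->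
  INR (length l) * rpow delta p <= M.
Proof.
  intros Hp Hdelta Hf Hnd Hl.
  apply Rle_trans with (sumR (fun z => rpow (Rabs (f z)) p) l).
  - apply sumR_ge_length_mul. intros z Hz. apply rpow_le; [exact Hp | split; [exact Hdelta | apply Hl, Hz]].
  - apply Hf; [exact Hnd | apply Hl].
Qed.

Section AffineAction.
Context {G : Type} {mul : G -> G -> G} {inv : G -> G} {e : G} {d : G -> G -> R}.
Hypotheses (Hgrp : is_group mul inv e) (LI : left_invariant mul d).

Lemma lin_act_1 phi z : lin_act mul inv e phi z = phi z.
Proof. destruct z as [x y]. unfold lin_act; simpl. now rewrite (inv_1 Hgrp), !(mul_1_l Hgrp). Qed.

Lemma lin_act_mul g h phi z :
  lin_act mul inv (mul g h) phi z = lin_act mul inv g (lin_act mul inv h phi) z.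
Proof.
  unfold lin_act; simpl. destruct Hgrp as (A & _).
  now rewrite (inv_mul Hgrp), <- !A.
Qed.

Lemma lp_le_lin_act_of K C p f M g :
  lp_le d K C p f M -> lp_le d K C p (lin_act mul inv g f) M.
Proof.
  intros H l Hnd HD.
  set (tr := fun z : G * G => (mul (inv g) (fst z), mul (inv g) (snd z))).
  change (fold_right Rplus 0 (map (fun z => rpow (Rabs (f (tr z))) p) l) <= M).
  rewrite <- (map_map tr (fun z => rpow (Rabs (f z)) p)). apply H.
  - apply NoDup_map_NoDup_ForallPairs; [| exact Hnd].
    intros [x y] [x' y'] _ _ E. injection E as Ex Ey.
    apply (mul_cancel_l Hgrp) in Ex, Ey. now subst.
  - intros z Hz. apply in_map_iff in Hz as [z' [<- Hz']].
    unfold inDelta, tr; simpl. rewrite LI. apply HD, Hz'.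
Qed.

Lemma lp_le_lin_act K C p f M g :
  lp_le d K C p (lin_act mul inv g f) M <-> lp_le d K C p f M.
Proof.
  split; [| apply lp_le_lin_act_of].
  intros H. apply lp_le_ext with (lin_act mul inv (inv g) (lin_act mul inv g f)).
  - intros z. now rewrite <- lin_act_mul, (mul_inv_l Hgrp), lin_act_1.
  - now apply lp_le_lin_act_of.
Qed.

Lemma cocycle_1 z : is_metric d -> cocycle e d e z = 0.
Proof. intros (_ & Hd0 & _). unfold cocycle, gromov. rewrite (proj2 (Hd0 e e) eq_refl). lra. Qed.

Lemma cocycle_mul g h z :
  cocycle e d (mul g h) z = cocycle e d g z + lin_act mul inv g (cocycle e d h) z.
Proof.
  unfold cocycle, lin_act, gromov; simpl.
  assert (D1 : forall u, d e (mul (inv g) u) = d g u).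
  { intros u. rewrite <- (LI g). now rewrite (mul_1_r Hgrp), (mul_inv_cancel_r Hgrp). }
  assert (D2 : forall u, d h (mul (inv g) u) = d (mul g h) u).
  { intros u. now rewrite <- (LI g), (mul_inv_cancel_r Hgrp). }
  rewrite !D1, !D2. lra.
Qed.

Lemma aff_act_1 phi z : is_metric d -> aff_act mul inv e d e phi z = phi z.
Proof. intros Hmet. unfold aff_act. rewrite lin_act_1, cocycle_1 by exact Hmet. lra. Qed.

Lemma aff_act_mul g h phi z :
  aff_act mul inv e d (mul g h) phi z = aff_act mul inv e d g (aff_act mul inv e d h phi) z.
Proof.
  unfold aff_act at 1 2. rewrite lin_act_mul, cocycle_mul.
  unfold aff_act, lin_act. lra.
Qed.

Lemma lp_le_aff_act_sub K C p g phi psi M :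
  lp_le d K C p (fun z => phi z - psi z) M <->
  lp_le d K C p (fun z => aff_act mul inv e d g phi z - aff_act mul inv e d g psi z) M.
Proof.
  rewrite <- (lp_le_lin_act K C p _ M g).
  split; apply lp_le_ext; intros z; unfold aff_act, lin_act; lra.
Qed.

Lemma in_lp_aff_act K C p g phi : 0 <= p ->
  in_lp d K C p (cocycle e d g) -> in_lp d K C p phi -> in_lp d K C p (aff_act mul inv e d g phi).
Proof.
  intros Hp [M2 Hc] [M1 Hphi]. exists (Rpower 2 p * (M1 + M2)).
  apply lp_le_add; [exact Hp | now apply lp_le_lin_act_of | exact Hc].
Qed.

End AffineAction.

Section GromovProduct.
Context {G : Type} {d : G -> G -> R}.
Hypothesis Hmet : is_metric d.

Lemma gromov_comm o x y : gromov d o x y = gromov d o y x.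
Proof. destruct Hmet as (_ & _ & Hsym & _). unfold gromov. rewrite (Hsym x y). lra. Qed.

Lemma gromov_le_dist o g x : gromov d o g x <= d o g.
Proof.
  destruct Hmet as (_ & _ & Hsym & Htri). unfold gromov.
  pose proof (Htri o g x). pose proof (Hsym g x). lra.
Qed.

Lemma dist_sub_le_gromov o x y : d o x - d x y <= gromov d o x y.
Proof.
  destruct Hmet as (_ & _ & Hsym & Htri). unfold gromov.
  pose proof (Htri o y x). pose proof (Hsym x y). lra.
Qed.

Hypothesis Hstrong : strongly_hyperbolic d.

Lemma gromov_diff_le_exp o g x y :
  Rabs (gromov d o g x - gromov d o g y) <= exp (d o g - gromov d o x y).
Proof.
  assert (Hbound : forall u v, gromov d o g u - gromov d o g v <= exp (d o g - gromov d o u v)).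
  { intros u v. eapply Rle_trans; [apply sub_le_mul_exp, (Hstrong g v u o) |].
    replace (d o g - gromov d o u v) with (- gromov d o u v + d o g) by ring. rewrite exp_plus.
    apply Rmult_le_compat_l; [left; apply exp_pos | apply exp_le_exp, gromov_le_dist]. }
  apply Rabs_le. split.
  - rewrite gromov_comm. pose proof (Hbound y x). lra.
  - apply Hbound.
Qed.

Lemma cocycle_decay (e g x y : G) :
  Rabs (cocycle e d g (x, y)) <= exp (d e g + d x y - d e x).
Proof.
  unfold cocycle; simpl. eapply Rle_trans; [apply gromov_diff_le_exp |].
  apply exp_le_exp. pose proof (dist_sub_le_gromov e x y). lra.
Qed.

End GromovProduct.

Definition nat_up (r : R) : nat := Z.to_nat (up r).

Lemma le_nat_up n r : INR n <= r -> (n <= nat_up r)%nat.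
Proof.
  intros H. destruct (archimed r) as [Hup _]. unfold nat_up.
  assert (Hz : (0 <= up r)%Z) by (apply le_IZR; pose proof (pos_INR n); lra).
  apply INR_le. rewrite (INR_IZR_INZ (Z.to_nat _)), Z2Nat.id by exact Hz. lra.
Qed.

Lemma nat_up_le r : 0 <= r -> INR (nat_up r) <= r + 1.
Proof.
  intros Hr. destruct (archimed r) as [Hup Hup1]. unfold nat_up.
  assert (Hz : (0 <= up r)%Z) by (apply le_IZR; lra).
  rewrite INR_IZR_INZ, Z2Nat.id by exact Hz. lra.
Qed.

Lemma exists_nat_floor r : 0 <= r -> exists n, INR n <= r < INR n + 1.
Proof.
  intros Hr. destruct (archimed r) as [Hup Hup1].
  assert (Hz : (0 < up r)%Z) by (apply lt_IZR; lra).
  exists (Z.to_nat (up r - 1)). rewrite INR_IZR_INZ, Z2Nat.id by lia. rewrite minus_IZR. simpl. lra.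
Qed.

Fixpoint words_upto {A : Type} (alph : list A) (m : nat) : list (list A) :=
  match m with
  | O => [[]]
  | S m => [] :: map (fun aw => fst aw :: snd aw) (list_prod alph (words_upto alph m))
  end.

Lemma In_words_upto {A : Type} (alph : list A) m w :
  incl w alph -> (length w <= m)%nat -> In w (words_upto alph m).
Proof.
  revert w; induction m as [| m IH]; intros w Hw Hlen.
  - destruct w; [now left | simpl in Hlen; lia].
  - destruct w as [| a w]; [now left |]. right.
    apply in_map_iff. exists (a, w). split; [reflexivity |].
    apply in_prod; [apply Hw; now left |].
    apply IH; [intros s Hs; apply Hw; now right | simpl in Hlen; lia].
Qed.

Lemma length_words_upto {A : Type} (alph : list A) m :
  (length (words_upto alph m) <= (length alph + 1) ^ m)%nat.
Proof.
  induction m as [| m IH]; simpl; [lia |].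
  rewrite length_map, length_prod.
  pose proof (Nat.pow_nonzero (length alph + 1) m ltac:(lia)). nia.
Qed.

Definition alphabet {G : Type} (inv : G -> G) (S : list G) : list G := S ++ map inv S.

Section WordGrowth.
Context {G : Type} {mul : G -> G -> G} {inv : G -> G} {e : G} {d : G -> G -> R}.
Hypothesis Hgrp : is_group mul inv e.
Variables (S : list G) (lam c : R).
Hypotheses (Hgen : generates mul inv e S) (Hlam : 0 < lam)
  (Hqi : forall x y r, word_dist mul inv e S x y r -> r / lam - c <= d x y).

Definition ball (k : nat) : list G := map (wprod mul e) (words_upto (alphabet inv S) k).

Definition level (x : G) : nat := nat_up (lam * (d e x + c)).

Lemma length_ball k : (length (ball k) <= (length (alphabet inv S) + 1) ^ k)%nat.
Proof. unfold ball. rewrite length_map. apply length_words_upto. Qed.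

Lemma exists_word_length x : exists n, word_length mul inv e S x n.
Proof.
  set (P := fun n => exists w, word_over inv S w /\ wprod mul e w = x /\ length w = n).
  destruct (dec_inh_nat_subset_has_unique_least_element P) as [n [[Pn Hmin] _]].
  - intros n; apply classic.
  - destruct (Hgen x) as [w [Hw Hx]]. now exists (length w), w.
  - exists n. split; [exact Pn |]. intros w Hw Hx. apply Hmin. now exists w.
Qed.

Lemma short_word x : exists w,
  incl w (alphabet inv S) /\ wprod mul e w = x /\ INR (length w) <= lam * (d e x + c).
Proof.
  destruct (exists_word_length x) as [n Hn]. pose proof Hn as [[w (Hw & Hx & Hlen)] _].
  exists w. repeat split.
  - intros s Hs. apply in_or_app. destruct (Hw s Hs) as [HS | HS]; [now left | right].
    rewrite <- (inv_inv Hgrp s). now apply in_map.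
  - exact Hx.
  - assert (Hd : word_dist mul inv e S e x (INR n)).
    { exists n. now rewrite (inv_1 Hgrp), (mul_1_l Hgrp). }
    apply Hqi in Hd. rewrite Hlen.
    replace (INR n) with (lam * (INR n / lam)) by (field; lra).
    apply Rmult_le_compat_l; lra.
Qed.

Lemma In_ball x R : d e x <= R -> In x (ball (nat_up (lam * (R + c)))).
Proof.
  intros HR. destruct (short_word x) as (w & Hw & Hx & Hlen).
  unfold ball. rewrite <- Hx. apply in_map, In_words_upto; [exact Hw |].
  apply le_nat_up. apply Rle_trans with (1 := Hlen). apply Rmult_le_compat_l; lra.
Qed.

Lemma In_ball_level x : In x (ball (level x)).
Proof. apply In_ball, Rle_refl. Qed.

Lemma level_le x : INR (level x) <= lam * (d e x + c) + 1.
Proof.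
  apply nat_up_le. destruct (short_word x) as (w & _ & _ & Hlen).
  pose proof (pos_INR (length w)). lra.
Qed.

Hypothesis LI : left_invariant mul d.

Definition near_pairs (R0 : R) (k : nat) : list (G * G) :=
  map (fun xv => (fst xv, mul (fst xv) (snd xv)))
      (list_prod (ball k) (ball (nat_up (lam * (R0 + c))))).

Lemma In_near_pairs x y R0 : d x y <= R0 -> In (x, y) (near_pairs R0 (level x)).
Proof.
  intros Hxy. apply in_map_iff. exists (x, mul (inv x) y).
  split; [simpl; now rewrite (mul_inv_cancel_r Hgrp) |].
  apply in_prod; [apply In_ball_level | apply In_ball].
  now rewrite <- (LI x), (mul_inv_cancel_r Hgrp), (mul_1_r Hgrp).
Qed.

Lemma length_near_pairs R0 k :
  INR (length (near_pairs R0 k)) <=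
  (INR (length (alphabet inv S)) + 1) ^ k * (INR (length (alphabet inv S)) + 1) ^ nat_up (lam * (R0 + c)).
Proof.
  unfold near_pairs. rewrite length_map, length_prod, <- S_INR, <- !pow_INR, <- mult_INR.
  apply le_INR, Nat.mul_le_mono; rewrite <- Nat.add_1_r; apply length_ball.
Qed.

Hypotheses (Hmet : is_metric d) (Hstrong : strongly_hyperbolic d).

Lemma cocycle_rpow_le_level g x y p : 0 <= p ->
  rpow (Rabs (cocycle e d g (x, y))) p <=
  exp (p * (d e g + d x y + c + / lam)) * exp (- (p / lam)) ^ level x.
Proof.
  intros Hp. eapply Rle_trans.
  { apply rpow_le; [exact Hp | split; [apply Rabs_pos | now apply cocycle_decay]]. }
  rewrite rpow_exp, exp_pow, <- exp_plus. apply exp_le_exp.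
  assert (Hk : INR (level x) / lam <= d e x + c + / lam).
  { pose proof (level_le x). apply Rmult_le_reg_l with lam; [exact Hlam |].
    replace (lam * (INR (level x) / lam)) with (INR (level x)) by (field; lra).
    replace (lam * (d e x + c + / lam)) with (lam * (d e x + c) + 1) by (field; lra). lra. }
  replace (INR (level x) * - (p / lam)) with (- (p * (INR (level x) / lam))) by (field; lra).
  nra.
Qed.

Lemma cocycle_in_lp K C p g :
  lam * (ln (INR (length (alphabet inv S)) + 1) + 1) <= p -> in_lp d K C p (cocycle e d g).
Proof.
  intros Hp.
  set (a := INR (length (alphabet inv S)) + 1) in *.
  set (q := exp (- (p / lam))).
  set (E := exp (p * (d e g + (K + C) + c + / lam))).
  set (W := a ^ nat_up (lam * ((K + C) + c))).
  assert (Ha : 1 <= a) by (unfold a; pose proof (pos_INR (length (alphabet inv S))); lra).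
  assert (Hlna : 0 <= ln a) by (now apply ln_ge0).
  assert (Hp0 : 0 < p) by (pose proof (Rmult_lt_0_compat lam (ln a + 1) Hlam ltac:(lra)); lra).
  assert (Hq : 0 < q) by apply exp_pos.
  assert (HE : 0 < E) by apply exp_pos.
  assert (HW : 0 < W) by (apply pow_lt; lra).
  (* Balls grow by at most a factor [a] per level while [|c_g|^p] shrinks by [q]. *)
  assert (Hratio : 0 <= a * q < 1) by (split; [nra | now apply mul_exp_neg_div_lt_1]).
  exists (W * E * / (1 - a * q)).
  intros l Hnd HD.
  change (sumR (fun z => rpow (Rabs (cocycle e d g z)) p) l <= W * E * / (1 - a * q)).
  set (N := list_max (map (fun z => level (fst z)) l)).
  apply Rle_trans with (sum_f_R0 (fun k => INR (length (near_pairs (K + C) k)) * (E * q ^ k)) N).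
  { apply sumR_le_by_levels with (lev := fun z => level (fst z)).
    - exact Hnd.
    - intros k. pose proof (pow_lt q k Hq). nra.
    - intros [x y] Hz. destruct (HD _ Hz) as [_ Hxy]; simpl in Hxy |- *. split; [| split].
      + apply In_le_list_max, (in_map (fun z => level (fst z)) _ _ Hz).
      + now apply In_near_pairs.
      + eapply Rle_trans; [apply cocycle_rpow_le_level; lra |].
        apply Rmult_le_compat_r; [apply pow_le; lra |].
        apply exp_le_exp, Rmult_le_compat_l; lra. }
  apply Rle_trans with (sum_f_R0 (fun k => (a * q) ^ k * (W * E)) N).
  { apply sum_Rle. intros k _. rewrite Rpow_mult_distr.
    pose proof (length_near_pairs (K + C) k) as Hlen. fold a W in Hlen.
    pose proof (pow_lt q k Hq). pose proof (pow_lt a k ltac:(lra)).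
    apply Rle_trans with (a ^ k * W * (E * q ^ k)); [apply Rmult_le_compat_r; nra | nra]. }
  rewrite <- scal_sum. apply Rmult_le_compat_l; [nra | now apply sum_geom_le].
Qed.

End WordGrowth.

Section RoughGeodesic.
Context {G : Type} {d : G -> G -> R} (C : R) (gam : R -> G) (a b : R).
Hypothesis Hgam : forall s t, a <= s <= b -> a <= t <= b ->
  Rabs (s - t) - C <= d (gam s) (gam t) <= Rabs (s - t) + C.

Lemma gromov_gap_rough_geodesic s t : a <= s -> s <= t -> t <= b ->
  t - s - 2 * C <= gromov d (gam a) (gam b) (gam t) - gromov d (gam a) (gam b) (gam s).
Proof.
  intros Has Hst Htb. unfold gromov.
  pose proof (Hgam a s ltac:(lra) ltac:(lra)) as Has'.
  pose proof (Hgam a t ltac:(lra) ltac:(lra)) as Hat'.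
  pose proof (Hgam b s ltac:(lra) ltac:(lra)) as Hbs'.
  pose proof (Hgam b t ltac:(lra) ltac:(lra)) as Hbt'.
  rewrite Rabs_minus_sym, Rabs_pos_eq in Has', Hat' by lra.
  rewrite Rabs_pos_eq in Hbs', Hbt' by lra.
  lra.
Qed.

Definition geodesic_chain (K : R) (n : nat) : list (G * G) :=
  map (fun i => (gam (a + INR i * K), gam (a + INR (S i) * K))) (seq 0 n).

Variables (K : R) (n : nat).
Hypotheses (HC : 0 <= C) (HK : 2 * C < K) (Hn : INR n * K <= b - a).

Lemma geodesic_chain_range i : In i (seq 0 n) ->
  a <= a + INR i * K /\ a + INR (S i) * K <= b /\ a + INR (S i) * K = a + INR i * K + K.
Proof.
  intros Hi. apply in_seq in Hi.
  assert (INR (S i) <= INR n) by (apply le_INR; lia).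
  pose proof (pos_INR i). rewrite S_INR in *. repeat split; nra.
Qed.

Lemma length_geodesic_chain : length (geodesic_chain K n) = n.
Proof. unfold geodesic_chain. now rewrite length_map, length_seq. Qed.

Lemma NoDup_geodesic_chain : is_metric d -> NoDup (geodesic_chain K n).
Proof.
  intros (_ & Hd0 & _). apply NoDup_map_NoDup_ForallPairs; [| apply seq_NoDup].
  intros i j Hi Hj E. injection E as Eij _.
  destruct (geodesic_chain_range i Hi) as (Hi1 & Hi2 & _).
  destruct (geodesic_chain_range j Hj) as (Hj1 & Hj2 & _).
  pose proof (Hgam (a + INR i * K) (a + INR j * K) ltac:(rewrite S_INR in *; nra) ltac:(rewrite S_INR in *; nra)) as [Hsep _].
  rewrite Eij, (proj2 (Hd0 _ _) eq_refl) in Hsep.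
  destruct (Nat.lt_total i j) as [Hij | [Hij | Hij]]; [exfalso | exact Hij | exfalso];
    apply le_INR in Hij; rewrite S_INR in Hij.
  - rewrite Rabs_left1 in Hsep by nra. nra.
  - rewrite Rabs_pos_eq in Hsep by nra. nra.
Qed.

Lemma geodesic_chain_in_Delta z : In z (geodesic_chain K n) -> inDelta d K C z.
Proof.
  intros Hz. apply in_map_iff in Hz as [i [<- Hi]].
  destruct (geodesic_chain_range i Hi) as (Hi1 & Hi2 & Hstep).
  unfold inDelta; cbn [fst snd].
  pose proof (Hgam (a + INR i * K) (a + INR (S i) * K) ltac:(lra) ltac:(lra)) as Hd.
  rewrite Hstep in Hd |- *. replace (a + INR i * K - (a + INR i * K + K)) with (- K) in Hd by ring.
  rewrite Rabs_Ropp, Rabs_pos_eq in Hd by lra. exact Hd.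
Qed.

Lemma cocycle_geodesic_chain_ge z : In z (geodesic_chain K n) ->
  K - 2 * C <= Rabs (cocycle (gam a) d (gam b) z).
Proof.
  intros Hz. apply in_map_iff in Hz as [i [<- Hi]].
  destruct (geodesic_chain_range i Hi) as (Hi1 & Hi2 & Hstep).
  unfold cocycle; cbn [fst snd].
  pose proof (gromov_gap_rough_geodesic (a + INR i * K) (a + INR (S i) * K) Hi1 ltac:(lra) Hi2).
  rewrite Rabs_left1; lra.
Qed.

End RoughGeodesic.

Lemma dist_le_of_lp_le_cocycle {G : Type} (e : G) d C K p M g :
  is_metric d -> roughly_geodesic d C -> 0 <= C -> 2 * C < K -> 0 <= p ->
  lp_le d K C p (cocycle e d g) M -> d e g <= (M / rpow (K - 2 * C) p + 1) * K + C.
Proof.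
  intros Hmet Hgeo HC HK Hp Hlp.
  destruct (Hgeo e g) as (a & b & gam & Hab & <- & <- & Hgam).
  destruct (exists_nat_floor ((b - a) / K)) as [n [Hn1 Hn2]].
  { apply Rmult_le_pos; [lra | left; apply Rinv_0_lt_compat; lra]. }
  assert (HnK : INR n * K <= b - a).
  { apply Rmult_le_compat_r with (r := K) in Hn1; [| lra].
    now replace ((b - a) / K * K) with (b - a) in Hn1 by (field; lra). }
  assert (Hba : b - a < (INR n + 1) * K).
  { apply Rmult_lt_compat_r with (r := K) in Hn2; [| lra].
    now replace ((b - a) / K * K) with (b - a) in Hn2 by (field; lra). }
  assert (Hcount : INR n * rpow (K - 2 * C) p <= M).
  { rewrite <- (length_geodesic_chain gam a K n).
    apply (lp_le_length_mul_le d K C p (cocycle (gam a) d (gam b)) M); [exact Hp | lra | exact Hlp | |].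
    - exact (NoDup_geodesic_chain C gam a b Hgam K n HC HK HnK Hmet).
    - intros z Hz. split.
      + exact (geodesic_chain_in_Delta C gam a b Hgam K n HC HK HnK z Hz).
      + exact (cocycle_geodesic_chain_ge C gam a b Hgam K n HC HK HnK z Hz). }
  assert (Hdelta : 0 < rpow (K - 2 * C) p) by (rewrite rpow_Rpower by lra; apply exp_pos).
  assert (Hn : INR n <= M / rpow (K - 2 * C) p).
  { apply Rmult_le_reg_r with (rpow (K - 2 * C) p); [exact Hdelta |].
    unfold Rdiv. now rewrite Rmult_assoc, Rinv_l, Rmult_1_r by lra. }
  pose proof (Hgam a b ltac:(lra) ltac:(lra)) as [_ Hd].
  rewrite Rabs_minus_sym, Rabs_pos_eq in Hd by lra. nra.
Qed.

Theorem mainTheorem2 (G : Type) (mul : G -> G -> G) (inv : G -> G) (e : G)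
  (Hgrp : is_group mul inv e)
  (Hhyp : hyperbolic_group mul inv e)
  (Hnonel : non_elementary mul inv e)
  (d : G -> G -> R)
  (Hadm : admissible mul inv e d)
  (Hstrong : strongly_hyperbolic d)
  (C : R) (HC : 0 <= C) (HCgeod : roughly_geodesic d C)
  (K : R) (HK : K > 2 * C) :
  exists p0 : R, forall p : R, 1 <= p -> p0 <= p ->
    (* c_g ∈ ℓ^p(Δ) for every g *)
    (forall g, in_lp d K C p (cocycle e d g)) /\
    (* the affine maps preserve ℓ^p(Δ) *)
    (forall g phi, in_lp d K C p phi ->
        in_lp d K C p (aff_act mul inv e d g phi)) /\
    (* each affine map is an isometry of ℓ^p(Δ) *)
    (forall g phi psi M,
        lp_le d K C p (fun z => phi z - psi z) M <->
        lp_le d K C p (fun z => aff_act mul inv e d g phi z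
                               - aff_act mul inv e d g psi z) M) /\
    (* it is an action (on functions on Δ) *)
    (forall phi z, inDelta d K C z -> aff_act mul inv e d e phi z = phi z) /\
    (forall g h phi z, inDelta d K C z ->
        aff_act mul inv e d (mul g h) phi z =
        aff_act mul inv e d g (aff_act mul inv e d h phi) z) /\
    (* properness: ||c_g||_p -> oo, i.e. for every M only finitely many g
       satisfy ||c_g||_p^p <= M *)
    (forall M, exists l : list G, forall g,
        lp_le d K C p (cocycle e d g) M -> In g l).
Proof.
  destruct Hadm as (Hmet & LI & _ & S & Hgen & lam & c & Hlam & _ & Hqi).
  assert (Hlam0 : 0 < lam) by lra.
  assert (Hqi_lower : forall x y r, word_dist mul inv e S x y r -> r / lam - c <= d x y)
    by (intros x y r Hr; apply (Hqi x y r Hr)).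
  exists (lam * (ln (INR (length (alphabet inv S)) + 1) + 1)).
  intros p Hp1 Hp0.
  assert (Hcoc : forall g, in_lp d K C p (cocycle e d g))
    by (intros g; now apply (cocycle_in_lp Hgrp S lam c Hgen Hlam0 Hqi_lower LI Hmet Hstrong)).
  split; [exact Hcoc |].
  split; [intros g phi; apply in_lp_aff_act; [exact Hgrp | exact LI | lra | apply Hcoc] |].
  split; [intros g phi psi M; now apply lp_le_aff_act_sub |].
  split; [intros phi z _; now apply aff_act_1 |].
  split; [intros g h phi z _; now apply aff_act_mul |].
  intros M.
  eexists. intros g Hg.
  apply (In_ball Hgrp S lam c Hgen Hlam0 Hqi_lower g ((M / rpow (K - 2 * C) p + 1) * K + C)).
  apply (dist_le_of_lp_le_cocycle e d C K p M g Hmet HCgeod HC); [lra | lra | exact Hg].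
Qed.
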